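(* Let $\mu$ be the probability measure on $\mathrm{Homeo}_+(\mathbb{R})$ giving mass $1/2$ to each of the maps \[ f_1(x)=\begin{cases}x+1,& x<0,\\ 2x+1,& x\ge 0,\end{cases}\qquad f_2(x)=x-1. \] Then $\phi_+\equiv 1$ (every point tends to $+\infty$ almost surely under the forward dynamics), while $\hat\phi_0\equiv 1$ (under the inverse dynamics, for every point the random orbit almost surely tends neither to $+\infty$ nor to $-\infty$).
   Context: Let $g_1,g_2,\dots$ be i.i.d. random maps with law $\mu$, and set $F_n=g_n\circ\cdots\circ g_1$ (forward dynamics); the inverse dynamics is the random dynamical system defined by $\hat\mu$, the image of $\mu$ under $f\mapsto f^{-1}$, with random compositions $\hat F_n$. Let $\phi_+(x)=\mathbb{P}(\lim_n F_n(x)=+\infty)$, and $\hat\phi_0(x)=1-\mathbb{P}(\lim_n\hat F_n(x)=+\infty)-\mathbb{P}(\lim_n\hat F_n(x)=-\infty)$. *)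

From HB Require Import structures.
From mathcomp Require Import all_boot all_order all_algebra.
From mathcomp Require Import all_classical all_reals all_analysis.
From mathcomp Require Import lra.
Set Implicit Arguments. Unset Strict Implicit. Unset Printing Implicit Defensive.
Import Order.TTheory GRing.Theory Num.Theory.
Local Open Scope classical_set_scope.
Local Open Scope ring_scope.

Section Maps.
Variable R : realType.

Definition f1 (x : R) : R := if x < 0 then x + 1 else 2 * x + 1.
Definition f2 (x : R) : R := x - 1.

Definition f1inv (y : R) : R := if y < 1 then y - 1 else (y - 1) / 2.
Definition f2inv (y : R) : R := y + 1.

Lemma f1K : cancel f1 f1inv.
Proof.
move=> x; rewrite /f1; case: ifPn => hx; rewrite /f1inv.
  have -> : x + 1 < 1 by lra.
  by rewrite addrK.
rewrite -leNgt in hx.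
have -> : (2 * x + 1 < 1) = false by apply/negbTE; rewrite -leNgt; lra.
by rewrite addrK mulrAC divff ?pnatr_eq0 // mul1r.
Qed.

Lemma f1invK : cancel f1inv f1.
Proof.
move=> y; rewrite /f1inv; case: ifPn => hy; rewrite /f1.
  have -> : y - 1 < 0 by lra.
  by rewrite subrK.
rewrite -leNgt in hy.
have -> : ((y - 1) / 2 < 0) = false by apply/negbTE; rewrite -leNgt; lra.
by rewrite mulrC divfK ?pnatr_eq0 // subrK.
Qed.

Lemma f2K : cancel f2 f2inv. Proof. by move=> x; rewrite /f2 /f2inv subrK. Qed.
Lemma f2invK : cancel f2inv f2. Proof. by move=> y; rewrite /f2 /f2inv addrK. Qed.

(* random map selected by a coin: true -> f1, false -> f2 (law mu) *)
Definition gsel (b : bool) : R -> R := if b then f1 else f2.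
(* inverse random map (law \hat mu, the image of mu under f |-> f^-1) *)
Definition ginvsel (b : bool) : R -> R := if b then f1inv else f2inv.

(* random composition G_n = g_n o ... o g_1, with g_(k+1) = sel (X k w) *)
Fixpoint rcomp (sel : bool -> R -> R) (X : nat -> bool) (n : nat) (x : R) : R :=
  if n is m.+1 then sel (X m) (rcomp sel X m x) else x.

End Maps.

Definition iid_fair_coins (R : realType) (d : measure_display)
    (T : measurableType d) (P : probability T R) (X : nat -> T -> bool) : Prop :=
  [/\ (forall n, measurable_fun setT (X n)),
      (forall n (b : bool), P (X n @^-1` [set b]) = (2%:R^-1)%:E) &
      (forall (s : seq nat) (B : nat -> set bool), uniq s ->
         P (\bigcap_(i in [set` s]) (X i @^-1` B i))
         = (\prod_(i <- s) P (X i @^-1` B i))%E)].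

From HB Require Import structures.
From mathcomp Require Import all_boot all_order all_algebra.
From mathcomp Require Import all_classical all_reals all_analysis.
From mathcomp Require Import ring lra.
Import Order.TTheory GRing.Theory Num.Theory.
Local Open Scope classical_set_scope.
Local Open Scope ring_scope.
Set Implicit Arguments. Unset Strict Implicit. Unset Printing Implicit Defensive.

(* An event that only depends on the first n coins has
   probability equal to the explicit finite average [cexp n] of its indicator
   over the 2^n coin patterns; this follows from the product rule of
   [iid_fair_coins] ([coin_event_prob]).  Both forward maps are increasing and f1 >= x + 1, so
   the orbit dominates the simple random walk (SRW), which leaves every half
   line (-oo, L) quickly ([srw_majorant]: probability of exiting low plus
   expected exit time / k).  Once above L, the orbit returns below M with
   probability at most [return_bound M L], a superharmonic function of the
   forward kernel that tends to 0 at +oo.  Hence for every M the orbit is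
   eventually above M, almost surely: it tends to +oo.  On [2, +oo) the inverse step contracts the mean by 7/8,
   so the orbit cannot stay above 2 forever; on (-oo, 1) it is exactly a SRW,
   so it cannot stay below 1 forever ([eventually_in_null]).  Hence it tends
   neither to +oo nor to -oo, almost surely. *)

Definition ccons (c : bool) (w : nat -> bool) : nat -> bool :=
  fun i => if i is j.+1 then w j else c.
Definition cshift (k : nat) (w : nat -> bool) : nat -> bool :=
  fun i => w (k + i)%N.
Definition cglue (k : nat) (v w : nat -> bool) : nat -> bool :=
  fun i => if (i < k)%N then v i else w (i - k)%N.

Definition determined (A : Type) (n : nat) (F : (nat -> bool) -> A) : Prop :=
  forall v v', (forall i, (i < n)%N -> v i = v' i) -> F v = F v'.

Lemma cglue0 v w : cglue 0 v w = w.
Proof. by apply/funext => i; rewrite /cglue /= subn0. Qed.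

Lemma cglueS k c v w : cglue k.+1 (ccons c v) w = ccons c (cglue k v w).
Proof. by apply/funext => -[|i] //=; rewrite /cglue /= ltnS subSS. Qed.

Lemma cglue_prefix k v w i : (i < k)%N -> cglue k v w i = v i.
Proof. by rewrite /cglue => ->. Qed.

Lemma cshift_glue k v w : cshift k (cglue k v w) = w.
Proof. by apply/funext => i; rewrite /cshift /cglue ltnNge leq_addr /= addKn. Qed.

Section CoinExpectation.
Variable R : realFieldType.
Implicit Types (F G : (nat -> bool) -> R) (A : (nat -> bool) -> bool).

(* Expectation over the first n fair coins, the later coins set to false;
   it is the true expectation of every [F] determined by n coins. *)
Fixpoint cexp (n : nat) (F : (nat -> bool) -> R) : R :=
  if n is m.+1 then
    (cexp m (fun w => F (ccons true w)) + cexp m (fun w => F (ccons false w))) / 2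
  else F (fun=> false).

Lemma cexpS n F : cexp n.+1 F =
  (cexp n (fun w => F (ccons true w)) + cexp n (fun w => F (ccons false w))) / 2.
Proof. by []. Qed.

Lemma cexp_le n F G : (forall w, F w <= G w) -> cexp n F <= cexp n G.
Proof.
elim: n F G => [|n IH] F G H /=; first exact: H.
by rewrite ler_pM2r ?invr_gt0 ?ltr0n // lerD // IH.
Qed.

Lemma cexp_cst n (c : R) : cexp n (fun=> c) = c.
Proof. by elim: n => [|n IH] //=; rewrite IH; field. Qed.

Lemma cexp_mid n F G : cexp n (fun w => (F w + G w) / 2) = (cexp n F + cexp n G) / 2.
Proof. by elim: n F G => [|n IH] F G //=; rewrite !IH; field. Qed.

Lemma cexp_negb n A : cexp n (fun w => (~~ A w)%:R) = 1 - cexp n (fun w => (A w)%:R).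
Proof.
elim: n A => [|n IH] A /=; first by case: (A _); rewrite ?subrr ?subr0.
by rewrite !IH; field.
Qed.

Lemma cexp_ind_le1 n A : cexp n (fun w => (A w)%:R) <= 1.
Proof.
apply: (le_trans (@cexp_le n _ (fun=> 1) _)); last by rewrite cexp_cst.
by move=> w; case: (A w).
Qed.

Lemma cexp_glue a b F :
  cexp (a + b) F = cexp a (fun v => cexp b (fun w => F (cglue a v w))).
Proof.
elim: a F => [|a IH] F /=.
  by rewrite add0n; congr cexp; apply/funext => w; rewrite cglue0.
rewrite !IH.
by congr ((_ + _) / 2); congr cexp; apply/funext => v;
  congr cexp; apply/funext => w; rewrite cglueS.
Qed.

Lemma cexp_last n F : cexp n.+1 F =
  (cexp n (fun v => F (cglue n v (ccons true (fun=> false)))) +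
   cexp n (fun v => F (cglue n v (ccons false (fun=> false))))) / 2.
Proof. by rewrite -addn1 cexp_glue -cexp_mid. Qed.

End CoinExpectation.

Section CylinderEvents.
Variables (R : realType) (d : measure_display) (T : measurableType d)
  (P : probability T R) (X : nat -> T -> bool).
Hypothesis HX : iid_fair_coins P X.

Definition coin_event (F : (nat -> bool) -> bool) : set T := [set w | F (X^~ w)].

Definition rect (s : seq nat) (B : nat -> set bool) : set T :=
  \bigcap_(i in [set` s]) (X i @^-1` B i).

Definition pin_coin (n : nat) (b : bool) (B : nat -> set bool) : nat -> set bool :=
  fun i => if i == n then [set b] else B i.

Definition pin_last (n : nat) (b : bool) (F : (nat -> bool) -> bool) :=
  fun v => F (cglue n v (ccons b (fun=> false))).

Lemma coin_measurable i (B : set bool) : measurable (X i @^-1` B).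
Proof.
case: HX => mX _ _.
by rewrite -[X in measurable X]setTI; apply: mX.
Qed.

Lemma rect_measurable s B : measurable (rect s B).
Proof.
apply: fin_bigcap_measurable; first exact: finite_seq.
by move=> i _; apply: coin_measurable.
Qed.

Lemma rect_pin n s B b : n \notin s ->
  rect (n :: s) (pin_coin n b B) = X n @^-1` [set b] `&` rect s B.
Proof.
move=> ns; have neq i : i \in s -> (i == n) = false.
  by move=> si; apply/negbTE; apply: contraNneq ns => <-.
apply/seteqP; split => w /= H.
  split; first by have := H n; rewrite /pin_coin /= eqxx; apply; rewrite /= inE eqxx.
  move=> i /= si; have := H i; rewrite /pin_coin /= neq //.
  by apply; rewrite inE si orbT.
case: H => Hn H i /=; rewrite /pin_coin inE => /orP[/eqP->|si]; first by rewrite eqxx.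
by rewrite neq //; exact: H.
Qed.

Lemma rect_pin_prob n s B b : n \notin s -> uniq s ->
  P (rect (n :: s) (pin_coin n b B)) = ((2%:R^-1)%:E * P (rect s B))%E.
Proof.
move=> ns us; case: HX => _ Hhalf Hprod.
rewrite /rect Hprod /= ?ns // big_cons /pin_coin eqxx Hhalf; congr (_ * _)%E.
rewrite Hprod //; apply: eq_big_seq => i si.
by have -> : (i == n) = false by apply/negbTE; apply: contraNneq ns => <-.
Qed.

Lemma pin_last_determined n b F : determined n.+1 F -> determined n (pin_last n b F).
Proof.
move=> dF v v' H; apply: dF => i _; rewrite /cglue.
by case: ifP => // /H.
Qed.

Lemma pin_last_eq n F v : determined n.+1 F -> F v = pin_last n (v n) F v.
Proof.
move=> dF; apply: dF => i; rewrite ltnS leq_eqVlt => /orP[/eqP->|lin].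
  by rewrite /cglue ltnn subnn.
by rewrite cglue_prefix.
Qed.

Lemma rect_event_split n s B F : n \notin s -> determined n.+1 F ->
  rect s B `&` coin_event F =
  (rect (n :: s) (pin_coin n true B) `&` coin_event (pin_last n true F)) `|`
  (rect (n :: s) (pin_coin n false B) `&` coin_event (pin_last n false F)).
Proof.
move=> ns dF; rewrite !rect_pin // /coin_event; apply/seteqP; split => w /=.
  by move=> [Hr]; rewrite (pin_last_eq _ dF); case: (X n w); [left|right].
by move=> [[[<- Hr] HF]|[[<- Hr] HF]]; split; rewrite // (pin_last_eq _ dF).
Qed.

Lemma rect_event n : forall s B F, uniq s -> (forall i, i \in s -> (n <= i)%N) ->
  determined n F ->
  measurable (rect s B `&` coin_event F) /\
  P (rect s B `&` coin_event F) = (P (rect s B) * (cexp n (fun v => (F v)%:R))%:E)%E.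
Proof.
elim: n => [|n IH] s B F us sn dF.
  have eF w : F (X^~ w) = F (fun=> false) by apply: dF.
  rewrite /= /coin_event; case Hz : (F _).
    have -> : rect s B `&` [set w | F (X^~ w)] = rect s B.
      by apply/seteqP; split => w /=; [case|move=> H; split=> //; rewrite eF].
    by split; [exact: rect_measurable|rewrite mule1].
  have -> : rect s B `&` [set w | F (X^~ w)] = set0.
    by apply/seteqP; split => w //= [_]; rewrite eF Hz.
  by split; [exact: measurable0|rewrite measure0 mule0].
have ns : n \notin s by apply/negP => /sn; rewrite ltnn.
have us' : uniq (n :: s) by rewrite /= ns.
have sn' i : i \in n :: s -> (n <= i)%N.
  by rewrite inE => /orP[/eqP->//|/sn /ltnW].
have [mT PT] := IH _ (pin_coin n true B) _ us' sn' (pin_last_determined true dF).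
have [mF PF] := IH _ (pin_coin n false B) _ us' sn' (pin_last_determined false dF).
rewrite (rect_event_split B ns dF); split; first exact: measurableU.
rewrite measureU //; last first.
  rewrite !rect_pin //; apply/seteqP; split => w //=.
  by move=> [[[H1 _] _] [[H2 _] _]]; move: H1; rewrite H2.
apply: eq_trans (f_equal2 (fun a b => (a + b)%E) PT PF) _.
rewrite !rect_pin_prob // cexp_last.
have /fineK <- : P (rect s B) \is a fin_num by apply: fin_num_measure; exact: rect_measurable.
by rewrite -!EFinM -EFinD; congr EFin; rewrite /pin_last; ring.
Qed.

Lemma rect_nil B : rect [::] B = setT.
Proof. by apply/seteqP; split => w //= _ i. Qed.

Lemma coin_event_measurable n F : determined n F -> measurable (coin_event F).
Proof.
move=> dF; have [+ _] := @rect_event n [::] (fun=> setT) F isT (fun i => ltac:(by [])) dF.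
by rewrite rect_nil setTI.
Qed.

Lemma coin_event_prob n F : determined n F ->
  P (coin_event F) = (cexp n (fun v => (F v)%:R))%:E.
Proof.
move=> dF; have [_] := @rect_event n [::] (fun=> setT) F isT (fun i => ltac:(by [])) dF.
by rewrite rect_nil setTI probability_setT mul1e.
Qed.

End CylinderEvents.

Section Trajectories.
Variables (R : realType) (sel : bool -> R -> R).
Implicit Types (p : R -> bool) (v w : nat -> bool).

Lemma rcomp_determined k y : determined k (fun v => rcomp sel v k y).
Proof.
elim: k => [|k IH] v v' H //=.
by rewrite H // (IH v v') // => i ik; apply: H; exact: ltnW.
Qed.

Lemma rcomp_add v k j y :
  rcomp sel v (k + j) y = rcomp sel (cshift k v) j (rcomp sel v k y).
Proof. by elim: j => [|j IH]; [rewrite addn0|rewrite addnS /= IH]. Qed.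

Lemma rcomp_first v k y : rcomp sel v k.+1 y = rcomp sel (cshift 1 v) k (sel (v 0%N) y).
Proof. by rewrite -add1n rcomp_add. Qed.

Lemma cexp_markov k N x (G : R -> (nat -> bool) -> R) :
  cexp (k + N) (fun w => G (rcomp sel w k x) (cshift k w)) =
  cexp k (fun v => cexp N (G (rcomp sel v k x))).
Proof.
rewrite cexp_glue; congr cexp; apply/funext => v; congr cexp; apply/funext => w.
rewrite cshift_glue (@rcomp_determined k x (cglue k v w) v) // => i.
exact: cglue_prefix.
Qed.

Fixpoint stays p (N : nat) (y : R) w : bool :=
  p y && (if N is N'.+1 then stays p N' (sel (w 0%N) y) (cshift 1 w) else true).

Lemma staysP p N y w : stays p N y w <-> (forall i, (i <= N)%N -> p (rcomp sel w i y)).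
Proof.
elim: N y w => [|N IH] y w /=.
  by rewrite andbT; split => [py [|i]|H] //; exact: (H 0%N).
split => [/andP[py /IH H] [|i] // iN|H]; first by rewrite rcomp_first; exact: H.
apply/andP; split; first exact: (H 0%N).
by apply/IH => i iN; rewrite -rcomp_first; exact: H.
Qed.

Lemma stays_determined p N y : determined N (stays p N y).
Proof.
suff imp v v' : (forall i, (i < N)%N -> v i = v' i) -> stays p N y v -> stays p N y v'.
  by move=> v v' H; apply/idP/idP; apply: imp => // i /H.
move=> H /staysP Hv; apply/staysP => i iN.
rewrite -(@rcomp_determined i y v v'); first exact: Hv.
by move=> j ji; apply: H; exact: leq_trans ji iN.
Qed.

Definition stay_prob p (N : nat) (y : R) : R := cexp N (fun w => (stays p N y w)%:R).

Lemma stay_prob_S p N y : stay_prob p N.+1 y =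
  if p y then (stay_prob p N (sel true y) + stay_prob p N (sel false y)) / 2 else 0.
Proof. by rewrite /stay_prob /=; case: (p y) => //=; rewrite !cexp_cst addr0 mul0r. Qed.

Lemma stay_bound p (Phi : nat -> R -> R) :
  (forall y, (p y)%:R <= Phi 0%N y) ->
  (forall N y, ~~ p y -> 0 <= Phi N.+1 y) ->
  (forall N y, p y -> (Phi N (sel true y) + Phi N (sel false y)) / 2 <= Phi N.+1 y
                      \/ 1 <= Phi N.+1 y) ->
  forall N y, stay_prob p N y <= Phi N y.
Proof.
move=> H0 Hout Hstep; elim => [|N IH] y; first by rewrite /stay_prob /= andbT.
case: (boolP (p y)) => py; last by rewrite stay_prob_S (negbTE py); exact: Hout.
case: (Hstep N y py) => H; last exact: le_trans (@cexp_ind_le1 R N.+1 (stays p N.+1 y)) H.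
apply: le_trans H; rewrite stay_prob_S py ler_pM2r ?invr_gt0 ?ltr0n //.
exact: lerD.
Qed.

Lemma leave_bound p (Phi : R -> R) :
  (forall y, (~~ p y)%:R <= Phi y) ->
  (forall y, p y -> (Phi (sel true y) + Phi (sel false y)) / 2 <= Phi y) ->
  forall N y, 1 - stay_prob p N y <= Phi y.
Proof.
move=> H0 Hs; elim => [|N IH] y.
  by have := H0 y; rewrite /stay_prob /= andbT; case: (p y); rewrite ?subrr ?subr0.
rewrite stay_prob_S; case: ifP => py; last by have := H0 y; rewrite py subr0.
apply: le_trans (Hs y py); have := IH (sel true y); have := IH (sel false y); lra.
Qed.

Definition superharmonic (G : R -> R) : Prop :=
  forall y, (G (sel true y) + G (sel false y)) / 2 <= G y.

Lemma cexp_traj_S k y (G : R -> R) : cexp k.+1 (fun v => G (rcomp sel v k.+1 y)) =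
  (cexp k (fun v => G (rcomp sel v k (sel true y))) +
   cexp k (fun v => G (rcomp sel v k (sel false y)))) / 2.
Proof.
by rewrite cexpS; congr ((cexp _ _ + cexp _ _) / 2); apply/funext => v; rewrite rcomp_first.
Qed.

Lemma superharmonic_traj G : superharmonic G ->
  forall k y, cexp k (fun v => G (rcomp sel v k y)) <= G y.
Proof.
move=> HG; elim => [|k IH] y //; rewrite cexp_traj_S.
apply: le_trans (HG y); rewrite ler_pM2r ?invr_gt0 ?ltr0n //; exact: lerD.
Qed.

Lemma superharmonic_stay G (L c : R) : superharmonic G ->
  (forall y, G y <= ((y < L)%R)%:R + c) ->
  forall k y, cexp k (fun v => G (rcomp sel v k y)) <= stay_prob (fun t => t < L) k y + c.
Proof.
move=> HG Hb; elim => [|k IH] y; first by rewrite /stay_prob /= andbT; exact: Hb.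
rewrite stay_prob_S; case: ifP => yL.
  rewrite cexp_traj_S; have := IH (sel true y); have := IH (sel false y); lra.
apply: le_trans (superharmonic_traj HG k.+1 y) _; have := Hb y; rewrite yL add0r; exact.
Qed.

End Trajectories.

Lemma rcomp_dominated (R : realType) (sel sel' : bool -> R -> R) v k y :
  (forall c, {homo sel c : a b / a <= b}) -> (forall c t, sel' c t <= sel c t) ->
  rcomp sel' v k y <= rcomp sel v k y.
Proof.
move=> mono dom; elim: k => [|k IH] //=.
exact: le_trans (dom _ _) (mono _ _ _ IH).
Qed.

Lemma stay_prob_dominated (R : realType) (sel sel' : bool -> R -> R) L N y :
  (forall c, {homo sel c : a b / a <= b}) -> (forall c t, sel' c t <= sel c t) ->
  stay_prob sel (fun t => t < L) N y <= stay_prob sel' (fun t => t < L) N y.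
Proof.
move=> mono dom; apply: cexp_le => w.
have imp : stays sel (fun t => t < L) N y w -> stays sel' (fun t => t < L) N y w.
  move=> /staysP H; apply/staysP => i iN.
  by apply: le_lt_trans (rcomp_dominated _ _ _ mono dom) _; exact: H.
by case: (stays sel _ _ _ _) imp => // ->.
Qed.

Lemma stay_prob_agree (R : realType) (sel sel' : bool -> R -> R) (p : R -> bool) N y :
  (forall c t, p t -> sel' c t = sel c t) -> stay_prob sel p N y = stay_prob sel' p N y.
Proof.
move=> agree; congr cexp; apply/funext => w; congr (_%:R).
elim: N y w => [|N IH] y w //=.
by case py: (p y) => //=; rewrite (agree _ _ py) IH.
Qed.

Lemma le_by_diff (R : realFieldType) (a b num den : R) :
  0 < den -> 0 <= num -> b - a = num / den -> a <= b.
Proof. by move=> d0 n0 E; rewrite -subr_ge0 E divr_ge0 // ltW. Qed.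

Lemma max0_ge0 (R : realDomainType) (x : R) : 0 <= Num.max x 0.
Proof. by rewrite le_max lexx orbT. Qed.

Lemma max0_ge (R : realDomainType) (x : R) : x <= Num.max x 0.
Proof. by rewrite le_max lexx. Qed.

Lemma min0_le0 (R : realDomainType) (x : R) : Num.min x 0 <= 0.
Proof. by rewrite ge_min lexx orbT. Qed.

Lemma min0_le (R : realDomainType) (x : R) : Num.min x 0 <= x.
Proof. by rewrite ge_min lexx. Qed.

Lemma exists_nat_ge (R : realType) (A : R) : exists M : nat, A <= M%:R.
Proof.
exists (Num.Def.archi_bound (Num.max A 0)).
by apply: le_trans (ltW (archi_boundP _)); rewrite ?max0_ge ?max0_ge0.
Qed.

Section SimpleRandomWalk.
Variable R : realType.

Definition unit_steps (sel : bool -> R -> R) : Prop :=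
  forall y, (sel true y = y + 1 /\ sel false y = y - 1) \/
            (sel true y = y - 1 /\ sel false y = y + 1).

(* For the SRW started at y in (lo, L + 1): the probability of reaching lo
   before L + 1, and an upper bound for the expected exit time. *)
Definition exit_low (L lo y : R) : R := (L + 1 - y) / (L + 1 - lo).
Definition exit_time (L lo y : R) : R := (y - lo + 1) * (L + 1 - y).

(* Staying below L for k steps requires either exiting low, or an exit time
   larger than k, whence a Markov-inequality majorant. *)
Definition srw_majorant (L lo : R) (k : nat) (y : R) : R :=
  Num.max (exit_low L lo y) 0 + Num.max (exit_time L lo y) 0 / k.+1%:R.

Lemma srw_majorant_ge0 L lo k y : 0 <= srw_majorant L lo k y.
Proof. by rewrite /srw_majorant addr_ge0 ?max0_ge0 // divr_ge0 ?max0_ge0. Qed.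

Lemma srw_majorant_low L lo k y : lo < L -> y <= lo -> 1 <= srw_majorant L lo k y.
Proof.
move=> lL ylo; have h1 : 1 <= exit_low L lo y.
  by apply: (le_by_diff (num := lo - y) (den := L + 1 - lo)); rewrite /exit_low; [lra|lra|field; lra].
have := max0_ge (exit_low L lo y); rewrite /srw_majorant.
have : 0 <= Num.max (exit_time L lo y) 0 / k.+1%:R by rewrite divr_ge0 ?max0_ge0.
set t := _ / _; lra.
Qed.

Lemma srw_majorant_step L lo N y : lo < y -> y < L ->
  exit_time L lo y < N.+2%:R ->
  (srw_majorant L lo N (y + 1) + srw_majorant L lo N (y - 1)) / 2
  <= srw_majorant L lo N.+1 y.
Proof.
move=> loy yL hph; rewrite /srw_majorant.
set K := N.+1%:R : R; have K0 : 0 < K by rewrite ltr0n.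
have K1 : N.+2%:R = K + 1 :> R by rewrite -natr1.
rewrite K1 in hph *.
have mx (t : R) : 0 <= t -> Num.max t 0 = t by move=> t0; apply: max_l.
rewrite !mx; try by rewrite /exit_low divr_ge0 //; lra.
  apply: (le_by_diff (num := K + 1 - exit_time L lo y) (den := K * (K + 1))).
  - by apply: mulr_gt0; lra.
  - lra.
  - by rewrite /exit_low /exit_time; field; repeat (apply/andP; split); lra.
all: by rewrite /exit_time; nra.
Qed.

Lemma srw_stay_bound sel L lo : lo < L -> unit_steps sel ->
  forall k y, stay_prob sel (fun t => t < L) k y <= srw_majorant L lo k y.
Proof.
move=> lL Hs; apply: stay_bound => [y|N y _|N y yL].
- case: (ltP y L) => yL /=; last exact: srw_majorant_ge0.
  case: (leP y lo) => ylo; first exact: srw_majorant_low.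
  rewrite /srw_majorant divr1; have := max0_ge0 (exit_low L lo y).
  have := max0_ge (exit_time L lo y).
  have : 1 <= exit_time L lo y by rewrite /exit_time; nra.
  lra.
- exact: srw_majorant_ge0.
case: (leP y lo) => ylo; first by right; apply: srw_majorant_low.
case: (ltP (exit_time L lo y) N.+2%:R) => hph.
  left; have -> : (srw_majorant L lo N (sel true y) + srw_majorant L lo N (sel false y)) / 2 =
      (srw_majorant L lo N (y + 1) + srw_majorant L lo N (y - 1)) / 2.
    by case: (Hs y) => -[-> ->] //; rewrite addrC.
  exact: srw_majorant_step.
right; rewrite /srw_majorant; have := max0_ge0 (exit_low L lo y).
have : 1 <= Num.max (exit_time L lo y) 0 / N.+2%:R.
  by rewrite ler_pdivlMr ?ltr0n // mul1r; apply: le_trans hph (max0_ge _).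
set t := _ / _; lra.
Qed.

Lemma exit_low_le (L lo0 lo y : R) : lo < lo0 -> lo0 <= L -> lo0 <= y ->
  Num.max (exit_low L lo y) 0 <= (L + 1 - lo0) / (L + 1 - lo).
Proof.
move=> l0 l0L l0y; rewrite ge_max; apply/andP; split; last by rewrite divr_ge0 //; lra.
by rewrite /exit_low ler_pM2r ?invr_gt0; lra.
Qed.

Lemma exit_time_le (L lo0 lo y : R) : lo < lo0 -> lo0 <= L -> lo0 <= y ->
  Num.max (exit_time L lo y) 0 <= (L + 2 - lo) * (L + 1 - lo0).
Proof.
move=> l0 l0L l0y; rewrite ge_max; apply/andP; split; last by apply: mulr_ge0; lra.
rewrite /exit_time; case: (leP y (L + 1)) => yL; last first.
  by apply: le_trans (_ : 0 <= _); [nra|apply: mulr_ge0; lra].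
by apply: ler_pM; lra.
Qed.

Lemma srw_majorant_small (L lo0 eps : R) : lo0 <= L -> 0 < eps ->
  exists lo k, lo < L /\ forall y, lo0 <= y -> srw_majorant L lo k y <= eps.
Proof.
move=> l0L e0; pose a := L + 1 - lo0; pose lo := lo0 - 2 * a / eps.
have a1 : 1 <= a by rewrite /a; lra.
have D0 : 0 < 2 * a / eps by rewrite divr_gt0 //; lra.
have [k Hk] := exists_nat_ge (2 * ((L + 2 - lo) * a) / eps).
exists lo, k; split=> [|y l0y]; first by rewrite /lo; lra.
have l0 : lo < lo0 by rewrite /lo; lra.
have hlow : a / (L + 1 - lo) <= eps / 2.
  have -> : L + 1 - lo = a + 2 * a / eps by rewrite /lo /a; ring.
  apply: (le_by_diff (num := eps * eps) (den := 2 * (eps + 2))); [lra|nra|].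
  by field; repeat (apply/andP; split); try lra; nra.
have htime : (L + 2 - lo) * a / k.+1%:R <= eps / 2.
  have -> : k.+1%:R = k%:R + 1 :> R by rewrite natr1.
  rewrite ler_pdivrMr; last by have := ler0n R k; lra.
  move: Hk; rewrite ler_pdivrMr // => Hk; have := ltW e0.
  set q := k%:R in Hk *; set t := (L + 2 - lo) * a in Hk *; nra.
rewrite /srw_majorant [eps]splitr; apply: lerD.
  by apply: le_trans hlow; exact: exit_low_le.
apply: le_trans htime; rewrite ler_pM2r ?invr_gt0 ?ltr0n //.
exact: exit_time_le.
Qed.

End SimpleRandomWalk.

Section ForwardDynamics.
Variable R : realType.

(* Superharmonic majorant of the probability that the forward orbit started
   at y ever goes below M; it tends to 0 as y -> +oo. *)
Definition return_bound (M y : R) : R := if y < M then 1 else 3 / (y - M + 3).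

Lemma return_bound_ge0 M y : 0 <= return_bound M y.
Proof. by rewrite /return_bound; case: ltP => // h; rewrite divr_ge0 //; lra. Qed.

Lemma return_bound_le1 M y : return_bound M y <= 1.
Proof.
rewrite /return_bound; case: ltP => // h.
by apply: (@le_by_diff _ _ _ (y - M) (y - M + 3)); [lra|lra|field; lra].
Qed.

Lemma return_bound_antitone M L y : M <= L -> L <= y -> return_bound M y <= return_bound M L.
Proof.
move=> ML Ly; rewrite /return_bound.
have -> : (y < M) = false by apply/negbTE; rewrite -leNgt; lra.
have -> : (L < M) = false by apply/negbTE; rewrite -leNgt; lra.
apply: (@le_by_diff _ _ _ (3 * (y - L)) ((y - M + 3) * (L - M + 3))).
- by apply: mulr_gt0; lra.
- by apply: mulr_ge0; lra.
- by field; repeat (apply/andP; split); lra.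
Qed.

Lemma return_bound_split M L y : M <= L -> return_bound M y <= ((y < L)%R)%:R + return_bound M L.
Proof.
move=> ML; case: (ltP y L) => yL /=.
  by have := return_bound_le1 M y; have := return_bound_ge0 M L; lra.
by rewrite add0r; apply: return_bound_antitone.
Qed.

Lemma return_bound_super M : 0 <= M -> superharmonic (@gsel R) (return_bound M).
Proof.
move=> M0 y; rewrite /gsel /f1 /f2.
case: (ltP y M) => yM.
  rewrite {3}/return_bound yM; have := return_bound_le1 M (y - 1).
  by have := return_bound_le1 M (if y < 0 then y + 1 else 2 * y + 1); lra.
have -> : (y < 0) = false by apply/negbTE; rewrite -leNgt; lra.
rewrite /return_bound.
have -> : (2 * y + 1 < M) = false by apply/negbTE; rewrite -leNgt; lra.
have -> : (y < M) = false by apply/negbTE; rewrite -leNgt; lra.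
set u := y - M + 3; set z := 2 * y + 1 - M + 3.
case: (ltP (y - 1) M) => y1M.
  apply: (@le_by_diff _ _ _ (6 * z - 3 * u - z * u) (2 * z * u)).
  - by apply: mulr_gt0; [apply: mulr_gt0|]; rewrite /z /u; lra.
  - by rewrite /z /u; nra.
  - by field; rewrite /z /u; repeat (apply/andP; split); lra.
apply: (@le_by_diff _ _ _ (6 * z * (u - 1) - 3 * u * (u - 1) - 3 * z * u) (2 * z * u * (u - 1))).
- by apply: mulr_gt0; [apply: mulr_gt0; [apply: mulr_gt0|]|]; rewrite /z /u; lra.
- by rewrite /z /u; nra.
- have -> : y - 1 - M + 3 = u - 1 by rewrite /u; ring.
  by field; rewrite /z /u; repeat (apply/andP; split); lra.
Qed.

Definition srw_up (c : bool) (y : R) : R := if c then y + 1 else y - 1.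

Lemma srw_up_unit : unit_steps srw_up.
Proof. by left. Qed.

Lemma gsel_mono c : {homo (@gsel R c) : a b / a <= b}.
Proof.
move=> a b ab; case: c; rewrite /gsel /f1 /f2; last lra.
by case: (ltP a 0) => ha; case: (ltP b 0) => hb; lra.
Qed.

Lemma gsel_ge_srw c t : srw_up c t <= @gsel R c t.
Proof. by case: c; rewrite /srw_up /gsel /f1 /f2 //; case: (ltP t 0) => h; lra. Qed.

(* From x, the probability of going below M within N steps after time k is
   at most the SRW majorant (still below L at time k) plus the return bound
   from L. *)
Lemma forward_return_prob (M L lo : R) k N x : 0 <= M -> M <= L -> lo < L ->
  cexp k (fun v => 1 - stay_prob (@gsel R) (fun t => M <= t) N (rcomp (@gsel R) v k x))
  <= srw_majorant L lo k x + return_bound M L.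
Proof.
move=> M0 ML lL.
apply: (@le_trans _ _ (cexp k (fun v => return_bound M (rcomp (@gsel R) v k x)))).
  apply: cexp_le => v; apply: leave_bound => [y|y _]; last exact: return_bound_super.
  by rewrite /return_bound; case: ltP => h /=; rewrite ?divr_ge0 //; lra.
apply: le_trans (superharmonic_stay (return_bound_super M0)
  (fun y => @return_bound_split M L y ML) k x) _.
rewrite lerD2r; apply: le_trans (stay_prob_dominated _ _ _ gsel_mono gsel_ge_srw) _.
exact: srw_stay_bound srw_up_unit _ _.
Qed.

End ForwardDynamics.

Section InverseDynamics.
Variable R : realType.

Definition srw_down (c : bool) (y : R) : R := if c then y - 1 else y + 1.

Lemma srw_down_unit : unit_steps srw_down.
Proof. by right. Qed.

Lemma ginvsel_low c t : t < 1 -> srw_down c t = @ginvsel R c t.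
Proof. by move=> t1; case: c; rewrite /srw_down /ginvsel /f1inv /f2inv // t1. Qed.

Lemma ginvsel_bounds c t : Num.min t 0 - 1 <= @ginvsel R c t <= Num.max t 0 + 1.
Proof.
have h1 := min0_le t; have h2 := min0_le0 t; have h3 := max0_ge t; have h4 := max0_ge0 t.
case: c; rewrite /ginvsel /f1inv /f2inv; last by apply/andP; split; lra.
by case: ifPn; rewrite ?(negbTE _) -?leNgt => h; apply/andP; split; lra.
Qed.

Lemma rcomp_ginv_bounds v k x :
  Num.min x 0 - k%:R <= rcomp (@ginvsel R) v k x <= Num.max x 0 + k%:R.
Proof.
elim: k => [|k IH] /=; first by rewrite subr0 addr0 ge_min le_max !lexx.
move: IH => /andP[lb ub]; have /andP[lb1 ub1] := ginvsel_bounds (v k) (rcomp (@ginvsel R) v k x).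
have m0 := min0_le0 x; have M0 := max0_ge0 x.
have mlb : Num.min x 0 - k%:R - 1 <= Num.min (rcomp (@ginvsel R) v k x) 0 - 1.
  by rewrite lerD2r le_min lb /=; have := ler0n R k; lra.
have Mub : Num.max (rcomp (@ginvsel R) v k x) 0 + 1 <= Num.max x 0 + k%:R + 1.
  by rewrite lerD2r ge_max ub /=; have := ler0n R k; lra.
by rewrite -natr1; apply/andP; split; lra.
Qed.

(* On [2, +oo) one inverse step maps y to (y - 1) / 2 or y + 1, whose mean
   is 7/8 of y up to a nonpositive term: the orbit cannot stay there. *)
Lemma inverse_stay_high N y :
  stay_prob (@ginvsel R) (fun t => 2 <= t) N y <= (7/8) ^+ N * Num.max y 0 / 2.
Proof.
apply: (stay_bound (Phi := fun N y => (7/8 : R) ^+ N * Num.max y 0 / 2)) => [y0|M y0 _|M y0 y02].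
- rewrite expr0 mul1r; case: (leP 2 y0) => h /=.
    by rewrite (max_l (ltW (lt_le_trans _ h))) //; lra.
  by rewrite divr_ge0 // max0_ge0.
- by rewrite !mulr_ge0 // ?exprn_ge0 // max0_ge0.
left; rewrite /ginvsel /f1inv /f2inv.
have -> : (y0 < 1) = false by apply/negbTE; rewrite -leNgt; lra.
rewrite (max_l (_ : 0 <= (y0 - 1) / 2)); last by rewrite divr_ge0 //; lra.
rewrite (max_l (_ : 0 <= y0 + 1)); last lra.
rewrite (max_l (_ : 0 <= y0)); last lra.
rewrite exprS; have : 0 <= (7/8 : R) ^+ M by rewrite exprn_ge0.
set e := (7/8 : R) ^+ M => e0; have : 0 <= e * (y0 - 2) by nra.
lra.
Qed.

End InverseDynamics.

Lemma geometric_small (R : realType) (q C eps : R) : 0 <= q < 1 -> 0 < eps ->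
  exists N : nat, q ^+ N * C <= eps.
Proof.
move=> /andP[q0 q1] e0; pose C' := Num.max C 0 + 1.
have C'0 : 0 < C' by have := max0_ge0 C; rewrite /C'; lra.
have /cvgr0Pnorm_lt /(_ (eps / C')) := @cvg_expr R q ltac:(by rewrite ger0_norm).
move=> /(_ (divr_gt0 e0 C'0)) [N _ /(_ N (leqnn N)) /=].
rewrite ger0_norm ?exprn_ge0 // ltr_pdivlMr // => hN; exists N.
apply: le_trans (ltW hN); rewrite ler_wpM2l ?exprn_ge0 //.
by have := max0_ge C; rewrite /C'; lra.
Qed.

Section OrbitEstimates.
Variable R : realType.

Lemma return_bound_small (M L eps : R) : 0 < eps -> M + 3 / eps <= L ->
  return_bound M L <= eps.
Proof.
move=> e0 hL; have e3 : 0 <= 3 / eps by rewrite divr_ge0 // ltW.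
rewrite /return_bound ifF; last by apply/negbTE; rewrite -leNgt; lra.
have he : eps * (3 / eps) = 3 by rewrite mulrC divfK // gt_eqF.
rewrite ler_pdivrMr; last lra.
have : eps * (M + 3 / eps) <= eps * L by rewrite ler_pM2l.
rewrite mulrDr he; nra.
Qed.

Lemma forward_leave_small (M x eps : R) : 0 <= M -> 0 < eps -> exists k, forall N,
  cexp k (fun v => 1 - stay_prob (@gsel R) (fun t => M <= t) N (rcomp (@gsel R) v k x)) <= eps.
Proof.
move=> M0 e0; pose L := Num.max (M + 3 / (eps / 2)) x.
have hL1 : M + 3 / (eps / 2) <= L by rewrite le_max lexx.
have hL2 : x <= L by rewrite le_max lexx orbT.
have ML : M <= L by apply: le_trans hL1; rewrite lerDl divr_ge0 //; lra.
have [lo [k [lL small]]] := srw_majorant_small hL2 (divr_gt0 e0 (@ltr0n R 2)).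
exists k => N; apply: le_trans (forward_return_prob k N x M0 ML lL) _.
rewrite [eps]splitr; apply: lerD; first exact: small.
by apply: return_bound_small hL1; rewrite divr_gt0.
Qed.

Lemma inverse_high_small k (x eps : R) : 0 < eps -> exists N,
  cexp k (fun v => stay_prob (@ginvsel R) (fun t => 2 <= t) N (rcomp (@ginvsel R) v k x)) <= eps.
Proof.
move=> e0; have [N HN] := @geometric_small R (7/8) ((Num.max x 0 + k%:R) / 2) eps
  ltac:(apply/andP; split; lra) e0.
exists N; rewrite -(cexp_cst k eps); apply: cexp_le => v.
apply: le_trans (inverse_stay_high _ _) (le_trans _ HN); rewrite -mulrA ler_wpM2l ?exprn_ge0 //.
rewrite ler_pM2r ?invr_gt0 ?ltr0n // ge_max.
have /andP[_ ->] := rcomp_ginv_bounds v k x.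
by rewrite addr_ge0 ?max0_ge0.
Qed.

(* Inverse orbit below 1: it is a SRW there, which leaves (-oo, 1). *)
Lemma inverse_low_small k (x eps : R) : 0 < eps -> exists N,
  cexp k (fun v => stay_prob (@ginvsel R) (fun t => t < 1) N (rcomp (@ginvsel R) v k x)) <= eps.
Proof.
move=> e0; pose lo0 := Num.min x 0 - k%:R.
have l0 : lo0 <= 1 by have := min0_le0 x; have := ler0n R k; rewrite /lo0; lra.
have [lo [N [lo1 small]]] := srw_majorant_small l0 e0.
exists N; rewrite -(cexp_cst k eps); apply: cexp_le => v.
rewrite (stay_prob_agree (sel' := @srw_down R)); last by move=> c t t1; exact: ginvsel_low.
apply: le_trans (srw_stay_bound lo1 (@srw_down_unit R) _ _) _; apply: small.
by have /andP[] := rcomp_ginv_bounds v k x.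
Qed.

End OrbitEstimates.

Section AlmostSureBehaviour.
Variables (R : realType) (d : measure_display) (T : measurableType d)
  (P : probability T R) (X : nat -> T -> bool).
Hypothesis HX : iid_fair_coins P X.
Implicit Types (sel : bool -> R -> R) (p : R -> bool).

Lemma orbit_measurable sel p n x : measurable [set w | p (rcomp sel (X^~ w) n x)].
Proof.
apply: (@coin_event_measurable _ _ _ P X HX n (fun v => p (rcomp sel v n x))).
by move=> v v' H; rewrite (@rcomp_determined R sel n x v v' H).
Qed.

Definition stays_after sel p (k N : nat) (x : R) : (nat -> bool) -> bool :=
  fun v => stays sel p N (rcomp sel v k x) (cshift k v).

Lemma stays_after_determined sel p k N x : determined (k + N) (stays_after sel p k N x).
Proof.
move=> v v' H; rewrite /stays_after (@rcomp_determined R sel k x v v'); last first.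
  by move=> i ik; apply: H; exact: leq_trans ik (leq_addr _ _).
by apply: stays_determined => i iN; apply: H; rewrite ltn_add2l.
Qed.

Lemma stays_after_prob sel p k N x : P (coin_event X (stays_after sel p k N x)) =
  (cexp k (fun v => stay_prob sel p N (rcomp sel v k x)))%:E.
Proof.
rewrite (coin_event_prob HX (@stays_after_determined sel p k N x)).
by rewrite (cexp_markov sel k N x (fun y w => (stays sel p N y w)%:R)).
Qed.

Lemma leaves_after_prob sel p k N x :
  P (coin_event X (fun v => ~~ stays_after sel p k N x v)) =
  (cexp k (fun v => 1 - stay_prob sel p N (rcomp sel v k x)))%:E.
Proof.
have dF : determined (k + N) (fun v => ~~ stays_after sel p k N x v).
  by move=> v v' H; rewrite (@stays_after_determined sel p k N x v v' H).
rewrite (coin_event_prob HX dF).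
rewrite (cexp_markov sel k N x (fun y w => (~~ stays sel p N y w)%:R)).
by congr (cexp _ _)%:E; apply/funext => v; rewrite cexp_negb.
Qed.

Lemma increasing_union_le (E : nat -> set T) (e : \bar R) :
  (forall N, measurable (E N)) -> (forall N, E N `<=` E N.+1) ->
  (forall N, (P (E N) <= e)%E) -> (P (\bigcup_N E N) <= e)%E.
Proof.
move=> mE inc PE.
have homo : {homo E : n m / (n <= m)%N >-> (n <= m)%O}.
  move=> n m nm; rewrite subsetEset; elim: m nm => [|m IH].
    by rewrite leqn0 => /eqP ->.
  rewrite leq_eqVlt => /orP[/eqP ->//|]; rewrite ltnS => /IH h.
  exact: subset_trans h (inc m).
have Hc := @nondecreasing_cvg_mu _ _ _ P _ mE (bigcupT_measurable _ mE) homo.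
rewrite -(cvg_lim _ Hc) //; apply: lime_le; first exact: cvgP Hc.
by apply: nearW => N; exact: PE.
Qed.

Definition eventually_in sel p (x : R) : set T :=
  \bigcup_k \bigcap_j [set w | p (rcomp sel (X^~ w) (k + j)%N x)].

Lemma eventually_in_measurable sel p x : measurable (eventually_in sel p x).
Proof.
apply: bigcupT_measurable => k; apply: bigcapT_measurable => j.
exact: orbit_measurable.
Qed.

Lemma eventually_in_sub sel p (q : R -> bool) x : (forall t, p t -> q t) ->
  eventually_in sel p x `<=` eventually_in sel q x.
Proof. by move=> pq w [k _ Hk]; exists k => // j _; apply: pq; exact: Hk. Qed.

Lemma orbit_cvgryE sel x :
  [set w | (fun n => rcomp sel (X^~ w) n x) @ \oo --> +oo%R] =
  \bigcap_(M : nat) eventually_in sel (fun t => M%:R <= t) x.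
Proof.
apply/seteqP; split => w /=.
  move/cvgryPge => H M _; have [k _ Hk] := H M%:R.
  by exists k => // j _; apply: Hk; rewrite /= leq_addr.
move=> H; apply/cvgryPge => A; have [M hM] := exists_nat_ge A.
have [k _ Hk] := H M I; exists k => // n /= kn.
by have := Hk (n - k)%N I; rewrite /= subnKC //; exact: le_trans hM.
Qed.

Lemma orbit_cvgrNyE sel x :
  [set w | (fun n => rcomp sel (X^~ w) n x) @ \oo --> -oo%R] =
  \bigcap_(M : nat) eventually_in sel (fun t => t <= - M%:R) x.
Proof.
apply/seteqP; split => w /=.
  move/cvgrNyPle => H M _; have [k _ Hk] := H (- M%:R).
  by exists k => // j _; apply: Hk; rewrite /= leq_addr.
move=> H; apply/cvgrNyPle => A; have [M hM] := exists_nat_ge (- A).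
have [k _ Hk] := H M I; exists k => // n /= kn.
have := Hk (n - k)%N I; rewrite /= subnKC // => h.
by apply: le_trans h _; rewrite lerNl.
Qed.

Lemma eventually_in_null sel p x :
  (forall k eps, 0 < eps -> exists N,
     cexp k (fun v => stay_prob sel p N (rcomp sel v k x)) <= eps) ->
  P (eventually_in sel p x) = 0%E.
Proof.
move=> small; apply/negligibleP; first exact: eventually_in_measurable.
apply: negligible_bigcup => k; apply/negligibleP.
  by apply: bigcapT_measurable => j; exact: orbit_measurable.
apply/eqP; rewrite eq_le measure_ge0 andbT.
apply/lee_addgt0Pr => eps e0; rewrite add0e; have [N HN] := small k eps e0.
have mF := coin_event_measurable HX (@stays_after_determined sel p k N x).
have sub : \bigcap_j [set w | p (rcomp sel (X^~ w) (k + j) x)] `<=`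
           coin_event X (stays_after sel p k N x).
  by move=> w Hw; apply/staysP => i iN; rewrite -rcomp_add; exact: (Hw i I).
have mB : measurable (\bigcap_j [set w | p (rcomp sel (X^~ w) (k + j) x)]).
  by apply: bigcapT_measurable => j; exact: orbit_measurable.
have hle : (P (\bigcap_j [set w | p (rcomp sel (X^~ w) (k + j) x)]) <=
            P (coin_event X (stays_after sel p k N x)))%E.
  by apply: le_measure; rewrite ?inE.
by apply: le_trans hle _; rewrite stays_after_prob lee_fin.
Qed.

Lemma leave_after_le sel p k x (e : R) :
  (forall N, cexp k (fun v => 1 - stay_prob sel p N (rcomp sel v k x)) <= e) ->
  (P (~` \bigcap_j [set w | p (rcomp sel (X^~ w) (k + j) x)]) <= e%:E)%E.
Proof.
move=> small; pose E N := coin_event X (fun v => ~~ stays_after sel p k N x v).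
have mE N : measurable (E N).
  apply: (coin_event_measurable HX (n := k + N)) => v v' H.
  by rewrite (@stays_after_determined sel p k N x v v' H).
have sub : (~` \bigcap_j [set w | p (rcomp sel (X^~ w) (k + j) x)]) `<=` \bigcup_N E N.
  move=> w /= nw; apply: contrapT => nE; apply: nw => j _.
  apply: contrapT => nj; apply: nE; exists j => //; apply/negP => /staysP.
  by move=> /(_ j (leqnn j)); rewrite -rcomp_add.
have mC : measurable (~` \bigcap_j [set w | p (rcomp sel (X^~ w) (k + j) x)]).
  by apply: measurableC; apply: bigcapT_measurable => j; exact: orbit_measurable.
have hle : (P (~` \bigcap_j [set w | p (rcomp sel (X^~ w) (k + j) x)]) <=
            P (\bigcup_N E N))%E.
  by apply: le_measure; rewrite ?inE //; exact: bigcupT_measurable.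
apply: le_trans hle _; apply: increasing_union_le => // [N w|N]; last by rewrite leaves_after_prob lee_fin.
apply: contra => /staysP H; apply/staysP => i iN; apply: H; exact: leqW.
Qed.

Lemma forward_diverges x :
  P [set w | (fun n => rcomp (@gsel R) (X^~ w) n x) @ \oo --> +oo%R] = 1%E.
Proof.
have mS M : measurable (eventually_in (@gsel R) (fun t => M%:R <= t) x).
  exact: eventually_in_measurable.
have nullC (M : nat) : P (~` eventually_in (@gsel R) (fun t => M%:R <= t) x) = 0%E.
  apply/eqP; rewrite eq_le measure_ge0 andbT.
  apply/lee_addgt0Pr => eps e0; rewrite add0e.
  have [k Hk] := forward_leave_small x (ler0n R M) e0.
  apply: le_trans (leave_after_le Hk); apply: le_measure; rewrite ?inE.
  - exact: measurableC.
  - by apply: measurableC; apply: bigcapT_measurable => j; exact: orbit_measurable.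
  by move=> w /= nw Hk'; apply: nw; exists k.
rewrite orbit_cvgryE -[X in P X]setCK probability_setC; last first.
  by apply: measurableC; exact: bigcapT_measurable.
suff -> : P (~` \bigcap_(M : nat) eventually_in (@gsel R) (fun t => M%:R <= t) x) = 0%E.
  by rewrite sube0.
apply/negligibleP; first by apply: measurableC; exact: bigcapT_measurable.
rewrite setC_bigcap; apply: negligible_bigcup => M.
by apply/negligibleP; [exact: measurableC|exact: nullC].
Qed.

(* Second claim: tending to +oo (resp. -oo) would force the inverse orbit to
   stay above 2 (resp. below 1) forever. *)
Lemma inverse_not_to_pinfty x :
  P [set w | (fun n => rcomp (@ginvsel R) (X^~ w) n x) @ \oo --> +oo%R] = 0%E.
Proof.
have null := eventually_in_null (fun k eps => @inverse_high_small R k x eps).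
apply/eqP; rewrite eq_le measure_ge0 andbT -null orbit_cvgryE.
apply: le_measure; rewrite ?inE.
- by apply: bigcapT_measurable => M; exact: eventually_in_measurable.
- exact: eventually_in_measurable.
by move=> w /(_ 2%N I); apply: eventually_in_sub.
Qed.

Lemma inverse_not_to_ninfty x :
  P [set w | (fun n => rcomp (@ginvsel R) (X^~ w) n x) @ \oo --> -oo%R] = 0%E.
Proof.
have null := eventually_in_null (fun k eps => @inverse_low_small R k x eps).
apply/eqP; rewrite eq_le measure_ge0 andbT -null orbit_cvgrNyE.
apply: le_measure; rewrite ?inE.
- by apply: bigcapT_measurable => M; exact: eventually_in_measurable.
- exact: eventually_in_measurable.
by move=> w /(_ 0%N I); apply: eventually_in_sub => t; rewrite oppr0 => /le_lt_trans; apply.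
Qed.

End AlmostSureBehaviour.

Theorem mainTheorem10 (R : realType) (d : measure_display) (T : measurableType d)
    (P : probability T R) (X : nat -> T -> bool) :
  iid_fair_coins P X ->
  (forall x : R,
     P [set w | (fun n => rcomp (@gsel R) (X ^~ w) n x) @ \oo --> +oo%R] = 1%E) /\
  (forall x : R,
     (1 - P [set w | (fun n => rcomp (@ginvsel R) (X ^~ w) n x) @ \oo --> +oo%R]
        - P [set w | (fun n => rcomp (@ginvsel R) (X ^~ w) n x) @ \oo --> -oo%R]
      = 1)%E).
Proof.
move=> HX; split => x; first exact: forward_diverges.
by rewrite inverse_not_to_pinfty // inverse_not_to_ninfty // !sube0.
Qed.
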